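(* Let $M$ be a holomorphic hypersurface of a Kähler manifold with Norden metric $(M',g,J)$ of dimension $2n+2$, and let $p\in M$. If there exists a nonzero vector $\eta$ normal to $M$ at $p$ such that $$A_\eta=\frac{\operatorname{trace}A_\eta}{2n}\,I-\frac{\operatorname{trace}(A_\eta\circ J)}{2n}\,J,$$ then $\sigma(x,y)=g(x,y)H-\tilde g(x,y)JH$ for all $x,y\in T_pM$.
   Context: A Kähler manifold with Norden metric: manifold $M'$ with almost complex structure $J$, pseudo-Riemannian metric $g$ with $g(JX,JY)=-g(X,Y)$ and $\nabla'J=0$; $\tilde g(X,Y)=g(JX,Y)$. A holomorphic hypersurface is a $2n$-dimensional submanifold $M$ with $J(T_pM)=T_pM$ and $g|_{T_pM}$ nondegenerate, with induced Levi-Civita connection $\nabla$; its second fundamental form $\sigma$ is defined by $\nabla'_XY=\nabla_XY+\sigma(X,Y)$ and its mean curvature vector is $H=\frac1{2n}\operatorname{trace}_g\sigma$. For a vector $\eta$ normal to $M$ at $p$, $A_\eta$ is the endomorphism of $T_pM$ with $g(A_\eta x,y)=g(\sigma(x,y),\eta)$; $I$ is the identity. *)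

From HB Require Import structures.
From mathcomp Require Import all_boot all_order all_algebra.
From mathcomp Require Import all_classical all_reals all_analysis.
Set Implicit Arguments. Unset Strict Implicit. Unset Printing Implicit Defensive.
Import Order.TTheory GRing.Theory Num.Theory.
Import numFieldNormedType.Exports.
Local Open Scope classical_set_scope.
Local Open Scope ring_scope.

(* Vectors are row vectors; a (0,2)-tensor G acts as g(X,Y) = X G Y^T;
   a (1,1)-tensor J acts on vectors by X |-> X *m J. *)
Definition gf {R : realType} {m : nat} (G : 'M[R]_m) (X Y : 'rV[R]_m) : R :=
  (X *m G *m Y^T) 0 0.

(* Lowered Christoffel symbols of the Levi-Civita connection of g at x:
   (christoffel_low g x X Y) . Z^T = g(nabla_X Y, Z) for constant fields,
   given by the Koszul formula. *)
Definition christoffel_low {R : realType} {m : nat}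
  (g : 'rV[R]_m -> 'M[R]_m) (x X Y : 'rV[R]_m) : 'rV[R]_m :=
  2^-1 *: (Y *m derive g x X + X *m derive g x Y
           - \row_l gf (derive g x (delta_mx 0 l)) X Y).

(* Gamma_x(X,Y), so that nabla'_X Y = D_X Y + Gamma(X, Y). *)
Definition christoffel {R : realType} {m : nat}
  (g : 'rV[R]_m -> 'M[R]_m) (x X Y : 'rV[R]_m) : 'rV[R]_m :=
  christoffel_low g x X Y *m invmx (g x).

(* (U, g, J): an open coordinate domain in R^m with a pseudo-Riemannian metric
   g, an almost complex structure J, Norden condition g(JX,JY) = -g(X,Y),
   and the Kaehler condition nabla' J = 0. *)
Definition kahler_norden {R : realType} {m : nat} (U : set 'rV[R]_m)
  (g J : 'rV[R]_m -> 'M[R]_m) : Prop :=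
  open U /\
  forall x, U x ->
    (g x)^T = g x /\ g x \in unitmx /\
        J x *m J x = - 1%:M /\
        J x *m g x *m (J x)^T = - g x /\
        differentiable g x /\ differentiable J x /\
        forall X Y : 'rV[R]_m,
          Y *m derive J x X + christoffel g x X (Y *m J x)
          - christoffel g x X Y *m J x = 0.

Definition df {R : realType} {d m : nat} (f : 'rV[R]_d -> 'rV[R]_m)
  (u a : 'rV[R]_d) : 'rV[R]_m := derive f u a.

(* f : V -> U is a (local parametrization of a) holomorphic hypersurface:
   an immersion whose tangent spaces are J-invariant and on which g is
   nondegenerate; f is twice differentiable. *)
Definition holomorphic_hypersurface {R : realType} {d m : nat}
  (U : set 'rV[R]_m) (g J : 'rV[R]_m -> 'M[R]_m)
  (V : set 'rV[R]_d) (f : 'rV[R]_d -> 'rV[R]_m) : Prop :=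
  open V /\
  forall u, V u ->
    U (f u) /\ differentiable f u /\
        (forall b, differentiable (fun w => df f w b) u) /\
        (forall a, df f u a = 0 -> a = 0) /\
        (forall a, exists b, df f u a *m J (f u) = df f u b) /\
        (forall b, exists a, df f u a *m J (f u) = df f u b) /\
        (forall a, (forall b, gf (g (f u)) (df f u a) (df f u b) = 0) -> a = 0).

Definition eb {R : realType} {d : nat} (a : 'I_d) : 'rV[R]_d := delta_mx 0 a.

Definition ind_metric {R : realType} {d m : nat} (g : 'rV[R]_m -> 'M[R]_m)
  (f : 'rV[R]_d -> 'rV[R]_m) (u : 'rV[R]_d) : 'M[R]_d :=
  \matrix_(a, b) gf (g (f u)) (df f u (eb a)) (df f u (eb b)).

Definition tan_proj {R : realType} {d m : nat} (g : 'rV[R]_m -> 'M[R]_m)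
  (f : 'rV[R]_d -> 'rV[R]_m) (u : 'rV[R]_d) (s : 'rV[R]_m) : 'rV[R]_m :=
  \sum_(a < d) \sum_(b < d)
     (gf (g (f u)) s (df f u (eb a)) * invmx (ind_metric g f u) a b)
       *: df f u (eb b).

Definition nor_proj {R : realType} {d m : nat} (g : 'rV[R]_m -> 'M[R]_m)
  (f : 'rV[R]_d -> 'rV[R]_m) (u : 'rV[R]_d) (s : 'rV[R]_m) : 'rV[R]_m :=
  s - tan_proj g f u s.

Definition sff {R : realType} {d m : nat} (g : 'rV[R]_m -> 'M[R]_m)
  (f : 'rV[R]_d -> 'rV[R]_m) (u a b : 'rV[R]_d) : 'rV[R]_m :=
  nor_proj g f u (derive (fun w => df f w b) u a
                  + christoffel g (f u) (df f u a) (df f u b)).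

Definition mean_curv {R : realType} {d m : nat} (g : 'rV[R]_m -> 'M[R]_m)
  (f : 'rV[R]_d -> 'rV[R]_m) (u : 'rV[R]_d) : 'rV[R]_m :=
  (d%:R)^-1 *: \sum_(a < d) \sum_(b < d)
     invmx (ind_metric g f u) a b *: sff g f u (eb a) (eb b).

(* Am is the matrix (in the coordinates a |-> df a) of A_eta:
   g(A_eta x, y) = g(sigma(x,y), eta). *)
Definition is_shape_op {R : realType} {d m : nat} (g : 'rV[R]_m -> 'M[R]_m)
  (f : 'rV[R]_d -> 'rV[R]_m) (u : 'rV[R]_d) (eta : 'rV[R]_m) (Am : 'M[R]_d) :=
  forall a b, gf (g (f u)) (df f u (a *m Am)) (df f u b)
              = gf (g (f u)) (sff g f u a b) eta.

Definition is_tangent_J {R : realType} {d m : nat} (J : 'rV[R]_m -> 'M[R]_m)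
  (f : 'rV[R]_d -> 'rV[R]_m) (u : 'rV[R]_d) (Jt : 'M[R]_d) :=
  forall a, df f u a *m J (f u) = df f u (a *m Jt).

From HB Require Import structures.
From mathcomp Require Import all_boot all_order all_algebra.
From mathcomp Require Import all_classical all_reals all_analysis.
From mathcomp Require Import ring.
Import Order.TTheory GRing.Theory Num.Theory.
Import numFieldNormedType.Exports.
Local Open Scope classical_set_scope.
Local Open Scope ring_scope.

(* The normal space at [f q] is spanned by [eta] and [J eta], and together
   with the tangent space they form a basis; so a normal vector is determined
   by its [g]-products with [eta] and [J eta].  For [sigma(x, y)] these are
   [g(A x, y)] and, because the Kaehler condition makes [sigma(x, J y) =
   J sigma(x, y)], [g(A x, J y)].  Tracing them against the induced metric gives
   [g(H, eta) = tr A / 2n] and [g(H, J eta) = tr (J A) / 2n], and the assumed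
   form of [A] then says that [sigma(x, y)] and [g(x, y) H - g(J x, y) J H] have
   the same products with [eta] and [J eta].
   The identity [sigma(x, J y) = J sigma(x, y)] needs the derivative of the
   tangent field [df y * J - df (y J)] to be tangent; it is a limit of tangent
   vectors at nearby points of the hypersurface. *)

Section EntrywiseLimits.
Context {R : realType}.

Definition mxlim0 {m n} (A : R -> 'M[R]_(m, n)) (L : 'M[R]_(m, n)) :=
  forall i j, A h i j @[h --> (0 : R)^'] --> L i j.

Lemma mxlim0_eq {m n} (A B : R -> 'M[R]_(m, n)) L :
  (forall h, A h = B h) -> mxlim0 A L -> mxlim0 B L.
Proof. by move=> AB; have -> : B = A by apply/funext => h; rewrite AB. Qed.

Lemma mxlim0_cst {m n} (C : 'M[R]_(m, n)) : mxlim0 (fun=> C) C.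
Proof. by move=> i j; exact: cvg_cst. Qed.

Lemma mxlim0D {m n} {A B : R -> 'M[R]_(m, n)} {L K} :
  mxlim0 A L -> mxlim0 B K -> mxlim0 (fun h => A h + B h) (L + K).
Proof.
by move=> AL BK i j; rewrite mxE; under eq_cvg do rewrite mxE; exact: cvgD.
Qed.

Lemma mxlim0B {m n} {A B : R -> 'M[R]_(m, n)} {L K} :
  mxlim0 A L -> mxlim0 B K -> mxlim0 (fun h => A h - B h) (L - K).
Proof.
by move=> AL BK i j; rewrite !mxE; under eq_cvg do rewrite !mxE; exact: cvgB.
Qed.

Lemma mxlim0Z {m n} {k : R -> R} {c : R} {A : R -> 'M[R]_(m, n)} {L} :
  k h @[h --> (0 : R)^'] --> c -> mxlim0 A L -> mxlim0 (fun h => k h *: A h) (c *: L).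
Proof.
by move=> kc AL i j; rewrite mxE; under eq_cvg do rewrite mxE; exact: cvgM.
Qed.

Lemma mxlim0M {m n p} {A : R -> 'M[R]_(m, n)} {B : R -> 'M[R]_(n, p)} {L K} :
  mxlim0 A L -> mxlim0 B K -> mxlim0 (fun h => A h *m B h) (L *m K).
Proof.
move=> AL BK i j; rewrite mxE; under eq_cvg do rewrite mxE.
apply: cvg_big => //; first exact: add_continuous.
by move=> k _; exact: cvgM.
Qed.

Lemma mxlim0_tr {m n} {A : R -> 'M[R]_(m, n)} {L} :
  mxlim0 A L -> mxlim0 (fun h => (A h)^T) L^T.
Proof. by move=> AL i j; rewrite mxE; under eq_cvg do rewrite mxE; exact: AL. Qed.

Lemma cvg_det {n} {A : R -> 'M[R]_n} {L} :
  mxlim0 A L -> \det (A h) @[h --> (0 : R)^'] --> \det L.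
Proof.
move=> AL; rewrite /determinant.
apply: cvg_big => //; first exact: add_continuous.
move=> s _; apply: cvgM; first exact: cvg_cst.
by apply: cvg_big => //; exact: mul_continuous.
Qed.

Lemma mxlim0_adj {n} {A : R -> 'M[R]_n} {L} :
  mxlim0 A L -> mxlim0 (fun h => \adj (A h)) (\adj L).
Proof.
move=> AL i j; rewrite mxE /cofactor; under eq_cvg do rewrite mxE /cofactor.
apply: cvgM; first exact: cvg_cst.
by apply: cvg_det => k l; rewrite !mxE; under eq_cvg do rewrite !mxE; exact: AL.
Qed.

End EntrywiseLimits.

Section LimitsAlongLines.
Context {R : realType}.

Lemma cvg_line {d} (x q : 'rV[R]_d) : h *: x + q @[h --> (0 : R)^'] --> q.
Proof.
have : h *: x + q @[h --> (0 : R)^'] --> 0 *: x + q.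
  apply: cvgD; last exact: cvg_cst.
  by apply: cvgZ; [exact: nbhs_dnbhs | exact: cvg_cst].
by rewrite scale0r add0r.
Qed.

Lemma mxlim0_continuous {d m n} {F : 'rV[R]_d -> 'M[R]_(m, n)} x {q} :
  differentiable F q -> mxlim0 (fun h => F (h *: x + q)) (F q).
Proof.
move=> dF i j.
have FF : F (h *: x + q) @[h --> (0 : R)^'] --> F q.
  by apply: cvg_comp; [exact: cvg_line | exact: (differentiable_continuous dF)].
exact: (cvg_comp (fun h => F (h *: x + q)) (fun M : 'M[R]_(m, n) => M i j) FF
  (@coord_continuous _ m n i j (F q))).
Qed.

Lemma mxlim0_derive {d m n} {F : 'rV[R]_d -> 'M[R]_(m, n)} x {q} :
  derivable F q x -> mxlim0 (fun h => h^-1 *: (F (h *: x + q) - F q)) ('D_x F q).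
Proof.
move=> dF i j; rewrite (derive_mx dF) mxE.
by under eq_cvg do rewrite !mxE; exact: (derivable_mxP F q x).1 dF i j.
Qed.

Lemma derive_comp_dir {d m p} {f : 'rV[R]_d -> 'rV[R]_m} {F : 'rV[R]_m -> 'M[R]_p} {q} x :
  differentiable f q -> differentiable F (f q) ->
  'D_x (F \o f) q = 'D_(df f q x) F (f q).
Proof.
move=> fq Ffq; have Ff : differentiable (F \o f) q := differentiable_comp fq Ffq.
by rewrite (deriveE _ Ff) diff_comp // /= -(deriveE _ fq) -(deriveE _ Ffq).
Qed.

(* With [P h := Dh h *m G *m (Dh h)^T], [psi h = c *m Dh h] implies
   [det (P h) *: psi h = psi h *m G *m (Dh h)^T *m adj (P h) *m Dh h],
   a polynomial identity that passes to the limit. *)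
Lemma lim0_quotient_in_image {d m} (psi : R -> 'rV[R]_m) (Dh : R -> 'M[R]_(d, m))
    (G : 'M[R]_m) L D :
  mxlim0 (fun h => h^-1 *: psi h) L -> mxlim0 Dh D ->
  (\forall h \near (0 : R)^', exists c, psi h = c *m Dh h) ->
  D *m G *m D^T \in unitmx -> exists c, L = c *m D.
Proof.
move=> psiL DhD psi_im Punit.
have PP : mxlim0 (fun h => Dh h *m G *m (Dh h)^T) (D *m G *m D^T).
  exact: mxlim0M (mxlim0M DhD (mxlim0_cst G)) (mxlim0_tr DhD).
have lhs := mxlim0Z (cvg_det PP) psiL.
have rhs := mxlim0M (mxlim0M (mxlim0M (mxlim0M psiL (mxlim0_cst G))
   (mxlim0_tr DhD)) (mxlim0_adj PP)) DhD.
have key : \det (D *m G *m D^T) *: L = L *m G *m D^T *m \adj (D *m G *m D^T) *m D.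
  apply/matrixP => i j.
  have rhs' : (\det (Dh h *m G *m (Dh h)^T) *: (h^-1 *: psi h)) i j @[h --> (0 : R)^']
      --> (L *m G *m D^T *m \adj (D *m G *m D^T) *m D) i j.
    apply: cvg_trans (rhs i j); apply: near_eq_cvg; apply: filterS psi_im.
    move=> h [c ->]; congr (_ i j).
    rewrite -!scalemxAl scalerA mulrC -scalerA.
    by rewrite -3!(mulmxA c) mul_mx_adj mul_mx_scalar -scalemxAl.
  exact: cvg_unique _ (lhs i j) rhs'.
have detP : \det (D *m G *m D^T) != 0 by rewrite -unitfE -unitmxE.
exists ((\det (D *m G *m D^T))^-1 *: (L *m G *m D^T *m \adj (D *m G *m D^T))).
by rewrite -scalemxAl -key scalerA mulVf // scale1r.
Qed.

End LimitsAlongLines.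

Section BilinearForm.
Context {R : realType} {m : nat}.
Implicit Types (G A : 'M[R]_m) (X Y : 'rV[R]_m).

Lemma gf_sym G X Y : G^T = G -> gf G X Y = gf G Y X.
Proof.
move=> Gsym; rewrite /gf.
have -> : (X *m G *m Y^T) 0 0 = ((X *m G *m Y^T)^T) 0 0 by rewrite [RHS]mxE.
by rewrite !trmx_mul trmxK Gsym mulmxA.
Qed.

Lemma gfDl G X1 X2 Y : gf G (X1 + X2) Y = gf G X1 Y + gf G X2 Y.
Proof. by rewrite /gf !mulmxDl mxE. Qed.

Lemma gfBl G X1 X2 Y : gf G (X1 - X2) Y = gf G X1 Y - gf G X2 Y.
Proof. by rewrite /gf !mulmxBl !mxE. Qed.

Lemma gfZl G k X Y : gf G (k *: X) Y = k * gf G X Y.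
Proof. by rewrite /gf -!scalemxAl mxE. Qed.

Lemma gf_suml G (I : Type) (r : seq I) (P : pred I) (F : I -> 'rV[R]_m) Y :
  gf G (\sum_(i <- r | P i) F i) Y = \sum_(i <- r | P i) gf G (F i) Y.
Proof.
elim/big_rec2: _ => [|i y1 y2 _ <-]; first by rewrite /gf !mul0mx mxE.
by rewrite gfDl.
Qed.

Lemma gfMl G A X Y : gf G (X *m A) Y = gf (A *m G) X Y.
Proof. by rewrite /gf !mulmxA. Qed.

Lemma gfMr G A X Y : gf G X (Y *m A) = gf (G *m A^T) X Y.
Proof. by rewrite /gf trmx_mul !mulmxA. Qed.

Lemma gf_pullback {k} G (A : 'M[R]_(k, m)) (X Y : 'rV[R]_k) :
  gf G (X *m A) (Y *m A) = gf (A *m G *m A^T) X Y.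
Proof. by rewrite /gf trmx_mul !mulmxA. Qed.

Lemma gf_eb G (i j : 'I_m) : gf G (eb i) (eb j) = G i j.
Proof. by rewrite /gf /eb trmx_delta -colE -rowE !mxE. Qed.

Lemma gf_adjoint {G A} : A *m G = G *m A^T ->
  forall X Y, gf G (X *m A) Y = gf G X (Y *m A).
Proof. by move=> AG X Y; rewrite gfMl gfMr AG. Qed.

Lemma anti_isometry_adjoint G A :
  A *m A = - 1%:M -> A *m G *m A^T = - G -> A *m G = G *m A^T.
Proof.
move=> AA AGA; have := congr1 (mulmx^~ A^T) AGA.
rewrite -mulmxA -trmx_mul AA linearN /= mulmxN tr_scalar_mx mulmx1 mulNmx.
by move/oppr_inj.
Qed.

Lemma gf_anti_isometry {G A} : A *m G *m A^T = - G ->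
  forall X Y, gf G (X *m A) (Y *m A) = - gf G X Y.
Proof. by move=> AGA X Y; rewrite gfMl gfMr AGA /gf mulmxN mulNmx mxE. Qed.

End BilinearForm.

Lemma mxtrace_mul_tr {R : comPzRingType} {k : nat} (A B : 'M[R]_k) :
  \tr (A *m B^T) = \sum_i \sum_j A i j * B i j.
Proof.
by apply: eq_bigr => i _; rewrite mxE; apply: eq_bigr => j _; rewrite mxE.
Qed.

Definition ambient_deriv {R : realType} {d m : nat} (g : 'rV[R]_m -> 'M[R]_m)
  (f : 'rV[R]_d -> 'rV[R]_m) (u a b : 'rV[R]_d) : 'rV[R]_m :=
  derive (fun w => df f w b) u a + christoffel g (f u) (df f u a) (df f u b).

Lemma sffE {R : realType} {d m : nat} (g : 'rV[R]_m -> 'M[R]_m)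
  (f : 'rV[R]_d -> 'rV[R]_m) u a b :
  sff g f u a b = nor_proj g f u (ambient_deriv g f u a b).
Proof. by []. Qed.

Definition jacobian {R : realType} {d m : nat} (f : 'rV[R]_d -> 'rV[R]_m) w :
  'M[R]_(d, m) := \matrix_(c < d) df f w (eb c).

Lemma dfE {R : realType} {d m : nat} (f : 'rV[R]_d -> 'rV[R]_m) w x :
  differentiable f w -> df f w x = x *m jacobian f w.
Proof.
move=> fw; rewrite mulmx_sum_row {1}(row_sum_delta x) /df (deriveE _ fw) linear_sum.
by apply: eq_bigr => c _; rewrite linearZ /= rowK /df (deriveE _ fw).
Qed.

Section Hypersurface.
Context {R : realType} {d : nat}.
Context {U : set 'rV[R]_d.+2} {g J : 'rV[R]_d.+2 -> 'M[R]_d.+2}.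
Context {V : set 'rV[R]_d} {f : 'rV[R]_d -> 'rV[R]_d.+2} {q : 'rV[R]_d}.
Context {Jt : 'M[R]_d}.
Hypothesis KN : kahler_norden U g J.
Hypothesis HS : holomorphic_hypersurface U g J V f.
Hypothesis Vq : V q.
Hypothesis Jt_tangent : is_tangent_J J f q Jt.

Local Notation G := (g (f q)).
Local Notation Jq := (J (f q)).
Local Notation D := (jacobian f q).
Local Notation M := (D *m G *m D^T).
Local Notation H := (mean_curv g f q).

Let Uq : U (f q). Proof. by case: HS => _ /(_ q Vq) []. Qed.
Let G_sym : G^T = G. Proof. by case: KN => _ /(_ _ Uq) []. Qed.
Let G_unit : G \in unitmx. Proof. by case: KN => _ /(_ _ Uq) [_ []]. Qed.
Let J_sq : Jq *m Jq = - 1%:M. Proof. by case: KN => _ /(_ _ Uq) [_ [_ []]]. Qed.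
Let J_norden : Jq *m G *m Jq^T = - G.
Proof. by case: KN => _ /(_ _ Uq) [_ [_ [_ []]]]. Qed.
Let J_diff : differentiable J (f q).
Proof. by case: KN => _ /(_ _ Uq) [_ [_ [_ [_ [_ []]]]]]. Qed.
Let kahler X Y : Y *m 'D_X J (f q) + christoffel g (f q) X (Y *m Jq)
                 - christoffel g (f q) X Y *m Jq = 0.
Proof. by case: KN => _ /(_ _ Uq) [_ [_ [_ [_ [_ [_ ]]]]]]; apply. Qed.
Let f_diff : differentiable f q. Proof. by case: HS => _ /(_ q Vq) [_ []]. Qed.
Let df_diff b : differentiable (fun w => df f w b) q.
Proof. by case: HS => _ /(_ q Vq) [_ [_ []]]. Qed.
Let nondegenerate a : (forall b, gf G (df f q a) (df f q b) = 0) -> a = 0.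
Proof. by case: HS => _ /(_ q Vq) [_ [_ [_ [_ [_ [_ ]]]]]]; apply. Qed.

Lemma gf_df x y : gf G (df f q x) (df f q y) = gf M x y.
Proof. by rewrite !dfE // gf_pullback. Qed.

Lemma ind_metricE : ind_metric g f q = M.
Proof. by apply/matrixP => i j; rewrite mxE gf_df gf_eb. Qed.

Lemma ind_metric_sym : M^T = M.
Proof. by rewrite !trmx_mul trmxK G_sym mulmxA. Qed.

Lemma ind_metric_unit : M \in unitmx.
Proof.
rewrite unitmxE unitfE; apply/negP => /det0P [v /eqP v0 vM]; apply: v0.
by apply: nondegenerate => y; rewrite gf_df /gf vM mul0mx mxE.
Qed.

Let J_G : Jq *m G = G *m Jq^T. Proof. exact: anti_isometry_adjoint. Qed.

Lemma jacobian_J : D *m Jq = Jt *m D.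
Proof. by apply/row_matrixP => i; rewrite !row_mul rowK Jt_tangent dfE // rowE. Qed.

Lemma Jt_adjoint : Jt *m M = M *m Jt^T.
Proof.
rewrite !mulmxA -jacobian_J -(mulmxA D) J_G mulmxA -!(mulmxA (D *m G)).
by rewrite -trmx_mul jacobian_J trmx_mul.
Qed.

Lemma Jt_anti_isometry : Jt *m M *m Jt^T = - M.
Proof.
have -> : Jt *m M *m Jt^T = (Jt *m D) *m G *m (Jt *m D)^T by rewrite trmx_mul !mulmxA.
rewrite -jacobian_J trmx_mul !mulmxA -(mulmxA D Jq G) -(mulmxA D (Jq *m G)).
by rewrite J_norden mulmxN mulNmx.
Qed.

Definition is_normal (X : 'rV[R]_d.+2) := X *m G *m D^T = 0.

Lemma gf_df_eb X i : gf G X (df f q (eb i)) = (X *m G *m D^T) 0 i.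
Proof.
by rewrite dfE // /gf /eb trmx_mul !mulmxA trmx_delta -colE [LHS]mxE.
Qed.

Lemma gf_df_eq0_normal {X} : (forall a, gf G X (df f q a) = 0) -> is_normal X.
Proof. by move=> XN; apply/rowP => j; rewrite [RHS]mxE -(XN (eb j)) gf_df_eb. Qed.

Lemma gf_normal_df {X} y : is_normal X -> gf G X (df f q y) = 0.
Proof. by rewrite /gf dfE // trmx_mul !mulmxA => ->; rewrite mul0mx mxE. Qed.

Lemma gf_tangent_normal c {X} : is_normal X -> gf G (c *m D) X = 0.
Proof. by move=> XN; rewrite gf_sym // -dfE // gf_normal_df. Qed.

Lemma is_normalB {X Y} : is_normal X -> is_normal Y -> is_normal (X - Y).
Proof. by rewrite /is_normal !mulmxBl => -> ->; rewrite subr0. Qed.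

Lemma is_normalZ k {X} : is_normal X -> is_normal (k *: X).
Proof. by rewrite /is_normal -!scalemxAl => ->; rewrite scaler0. Qed.

Lemma is_normalJ {X} : is_normal X -> is_normal (X *m Jq).
Proof.
rewrite /is_normal => XN; rewrite -(mulmxA X) J_G mulmxA -mulmxA -trmx_mul.
by rewrite jacobian_J trmx_mul mulmxA XN mul0mx.
Qed.

Lemma tan_projE s : tan_proj g f q s = s *m G *m D^T *m invmx M *m D.
Proof.
rewrite /tan_proj ind_metricE mulmx_sum_row exchange_big /=.
apply: eq_bigr => c _; rewrite -scaler_suml rowK; congr (_ *: _).
by rewrite mxE; apply: eq_bigr => i _; rewrite gf_df_eb.
Qed.

Lemma is_normal_nor_proj s : is_normal (nor_proj g f q s).
Proof.
rewrite /is_normal /nor_proj tan_projE !mulmxBl.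
rewrite -!(mulmxA (s *m G *m D^T *m invmx M)) -(mulmxA _ (invmx M)).
by rewrite mulVmx ?ind_metric_unit // mulmx1 subrr.
Qed.

Lemma gf_nor_proj s {X} : is_normal X -> gf G (nor_proj g f q s) X = gf G s X.
Proof. by move=> XN; rewrite /nor_proj gfBl tan_projE gf_tangent_normal // subr0. Qed.

Lemma is_normal_mean_curv : is_normal H.
Proof.
rewrite /is_normal /mean_curv -!scalemxAl !mulmx_suml big1 ?scaler0 // => i _.
rewrite !mulmx_suml big1 // => j _.
by rewrite -!scalemxAl is_normal_nor_proj scaler0.
Qed.

(* The vector fields [df y * J - df (y Jt)] vanish at [q] and are tangent
   along [f], so their derivative at [q] is tangent as well. *)
Lemma derive_df_J_tangent x y : exists c,
  'D_x (fun w => df f w y) q *m Jq + df f q y *m 'D_(df f q x) J (f q)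
  - 'D_x (fun w => df f w (y *m Jt)) q = c *m D.
Proof.
have [oV HV] := HS.
pose w h := h *: x + q.
apply: (@lim0_quotient_in_image _ _ _
  (fun h => df f (w h) y *m J (f (w h)) - df f (w h) (y *m Jt))
  (fun h => jacobian f (w h)) G); last exact: ind_metric_unit.
- have Du := mxlim0_derive x (diff_derivable (df_diff y)).
  have Dv := mxlim0_derive x (diff_derivable (df_diff (y *m Jt))).
  have Jf_diff : differentiable (J \o f) q := differentiable_comp f_diff J_diff.
  have DJ := mxlim0_derive x (diff_derivable Jf_diff).
  have CJ := mxlim0_continuous x Jf_diff.
  have := mxlim0B (mxlim0D (mxlim0M Du CJ) (mxlim0M (mxlim0_cst (df f q y)) DJ)) Dv.
  rewrite (derive_comp_dir x f_diff J_diff); apply: mxlim0_eq => h /=.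
  have product_rule (u u0 v v0 : 'rV[R]_d.+2) (A A0 : 'M[R]_d.+2) :
      u0 *m A0 = v0 -> (u - u0) *m A + u0 *m (A - A0) - (v - v0) = u *m A - v.
    by move=> <-; rewrite mulmxBl mulmxBr addrA subrK opprB addrA subrK.
  by rewrite -scalemxAl -scalemxAr -scalerDr -scalerBr product_rule.
- move=> i j; rewrite mxE; under eq_cvg do rewrite mxE.
  exact: (mxlim0_continuous x (df_diff (eb i)) 0 j).
- have Vw : \forall h \near (0 : R)^', V (w h).
    by apply: (cvg_line x q); apply: open_nbhs_nbhs; split.
  apply: filterS Vw => h /HV [_ [fw [_ [_ [Jw _]]]]].
  have [b ->] := Jw y.
  by exists (b - y *m Jt); rewrite !dfE // mulmxBl.
Qed.

Lemma ambient_deriv_J x y : exists c,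
  ambient_deriv g f q x y *m Jq = ambient_deriv g f q x (y *m Jt) + c *m D.
Proof.
have [c Dc] := derive_df_J_tangent x y.
have christoffelJ := kahler (df f q x) (df f q y).
rewrite (Jt_tangent y) in christoffelJ.
exists c; rewrite /ambient_deriv.
set u := 'D_x (fun w => df f w y) q in Dc *.
set v := 'D_x (fun w => df f w (y *m Jt)) q in Dc *.
set Ga := christoffel g (f q) (df f q x) (df f q y) in christoffelJ *.
set Gb := christoffel g (f q) (df f q x) (df f q (y *m Jt)) in christoffelJ *.
rewrite mulmxDl -(subr0_eq christoffelJ) -Dc.
by rewrite [RHS]addrC [RHS]addrA subrK addrA.
Qed.

Lemma gf_sff_J {xi} : is_normal xi -> forall x y,
  gf G (sff g f q x y) (xi *m Jq) = gf G (sff g f q x (y *m Jt)) xi.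
Proof.
move=> xiN x y; have [c Jc] := ambient_deriv_J x y.
rewrite !sffE.
transitivity (gf G (ambient_deriv g f q x y) (xi *m Jq)).
  exact: gf_nor_proj (is_normalJ xiN).
transitivity (gf G (ambient_deriv g f q x y *m Jq) xi).
  exact: esym (gf_adjoint J_G _ _).
rewrite Jc gfDl (gf_tangent_normal _ xiN) addr0.
exact: esym (gf_nor_proj _ xiN).
Qed.

Lemma normal_frame_unit {eta} : eta != 0 -> is_normal eta ->
  col_mx (col_mx eta (eta *m Jq)) D \in unitmx.
Proof.
move=> eta0 etaN; rewrite unitmxE unitfE; apply/negP => /det0P [v /eqP v0 vB].
apply: v0; pose w : 'rV[R]_(1 + 1 + d) := v.
pose k1 := lsubmx (lsubmx w) 0 0; pose k2 := rsubmx (lsubmx w) 0 0.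
pose c := rsubmx w.
have wE : w = row_mx (row_mx k1%:M k2%:M) c by rewrite -!mx11_scalar !hsubmxK.
have E : k1 *: eta + k2 *: (eta *m Jq) + c *m D = 0.
  by move: vB; rewrite -/w wE !mul_row_col !mul_scalar_mx.
have c0 : c = 0.
  have : (k1 *: eta + k2 *: (eta *m Jq) + c *m D) *m G *m D^T = 0 by rewrite E !mul0mx.
  rewrite !mulmxDl -!scalemxAl etaN (is_normalJ etaN) !scaler0 !add0r => cM.
  by rewrite -[c]mulmx1 -(mulmxV ind_metric_unit) mulmxA !mulmxA cM !mul0mx.
rewrite c0 mul0mx addr0 in E.
have EJ : k1 *: (eta *m Jq) - k2 *: eta = 0.
  have := congr1 (mulmx^~ Jq) E.
  by rewrite mul0mx mulmxDl -!scalemxAl -mulmxA J_sq mulmxN mulmx1 scalerN.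
have : k1 *: (k1 *: eta + k2 *: (eta *m Jq)) - k2 *: (k1 *: (eta *m Jq) - k2 *: eta)
    = (k1 ^+ 2 + k2 ^+ 2) *: eta.
  rewrite scalerDr scalerBr !scalerA scalerDl (mulrC k2 k1) opprB addrACA subrr.
  by rewrite addr0 !expr2.
rewrite E EJ !scaler0 subrr => /esym/eqP.
rewrite scaler_eq0 (negbTE eta0) orbF paddr_eq0 ?sqr_ge0 // !sqrf_eq0.
by case/andP => /eqP k10 /eqP k20; rewrite -/w wE -/k1 -/k2 k10 k20 c0 raddf0 !row_mx0.
Qed.

Lemma normal_eq0 {eta Y} : eta != 0 -> is_normal eta -> is_normal Y ->
  gf G Y eta = 0 -> gf G Y (eta *m Jq) = 0 -> Y = 0.
Proof.
move=> eta0 etaN YN Yeta YetaJ.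
have BTunit : (col_mx (col_mx eta (eta *m Jq)) D)^T \in unitmx.
  by rewrite unitmx_tr; exact: normal_frame_unit.
have gf11 X : gf G Y X = 0 -> Y *m G *m X^T = 0.
  by move=> YX; apply/matrixP => i j; rewrite !ord1 [RHS]mxE.
have YGB : Y *m G *m (col_mx (col_mx eta (eta *m Jq)) D)^T = 0.
  by rewrite !tr_col_mx !mul_mx_row YN gf11 // gf11 // !row_mx0.
have YG : Y *m G = 0.
  by rewrite -[Y *m G]mulmx1 -(mulmxV BTunit) mulmxA YGB mul0mx.
by rewrite -[Y]mulmx1 -(mulmxV G_unit) mulmxA YG mul0mx.
Qed.

Lemma gf_mean_curv X : gf G H X =
  d%:R^-1 * \sum_i \sum_j invmx M i j * gf G (sff g f q (eb i) (eb j)) X.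
Proof.
rewrite /mean_curv gfZl gf_suml ind_metricE; congr (_ * _).
by apply: eq_bigr => i _; rewrite gf_suml; apply: eq_bigr => j _; rewrite gfZl.
Qed.

Lemma gf_sff_shape {xi A} : is_shape_op g f q xi A ->
  forall x y, gf G (sff g f q x y) xi = gf M (x *m A) y.
Proof. by move=> xiA x y; rewrite -xiA gf_df. Qed.

Lemma gf_mean_curv_shape {xi A} : is_shape_op g f q xi A -> gf G H xi = \tr A / d%:R.
Proof.
move=> xiA; rewrite gf_mean_curv mulrC; congr (_ * _).
under eq_bigr do under eq_bigr do rewrite (gf_sff_shape xiA) gfMl gf_eb.
rewrite -mxtrace_mul_tr trmx_mul ind_metric_sym mulmxA mulVmx ?ind_metric_unit //.
by rewrite mul1mx mxtrace_tr.
Qed.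

Lemma gf_mean_curv_shapeJ {xi A} : is_normal xi -> is_shape_op g f q xi A ->
  gf G H (xi *m Jq) = \tr (Jt *m A) / d%:R.
Proof.
move=> xiN xiA; rewrite gf_mean_curv mulrC; congr (_ * _).
under eq_bigr do under eq_bigr do
  rewrite (gf_sff_J xiN) (gf_sff_shape xiA) gfMl gfMr gf_eb.
rewrite -mxtrace_mul_tr trmx_mul trmxK trmx_mul ind_metric_sym (mulmxA Jt) Jt_adjoint.
rewrite -(mulmxA M) (mulmxA (invmx M)) mulVmx ?ind_metric_unit // mul1mx.
by rewrite -trmx_mul mxtrace_tr mxtrace_mulC.
Qed.

Lemma sff_decomposition {eta Am} : eta != 0 -> is_normal eta ->
    is_shape_op g f q eta Am ->
    Am = (\tr Am / d%:R) *: 1%:M - (\tr (Jt *m Am) / d%:R) *: Jt ->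
  forall a b, sff g f q a b = gf G (df f q a) (df f q b) *: H
                              - gf G (df f q a *m Jq) (df f q b) *: (H *m Jq).
Proof.
move=> eta0 etaN etaA Am_eq a b.
have alpha := gf_mean_curv_shape etaA.
have beta := gf_mean_curv_shapeJ etaN etaA.
set al := \tr Am / d%:R in alpha Am_eq.
set be := \tr (Jt *m Am) / d%:R in beta Am_eq.
have gf_Am x y : gf M (x *m Am) y = al * gf M x y - be * gf M (x *m Jt) y.
  by rewrite Am_eq mulmxBr -!scalemxAr mulmx1 gfBl !gfZl.
rewrite (Jt_tangent a) !gf_df.
set gab := gf M a b; set gt := gf M (a *m Jt) b.
have HN := is_normal_mean_curv.
apply: subr0_eq; apply: (normal_eq0 eta0 etaN).
- exact: is_normalB (is_normal_nor_proj _)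
    (is_normalB (is_normalZ _ HN) (is_normalZ _ (is_normalJ HN))).
- rewrite (gfBl _ (sff g f q a b)) (gf_sff_shape etaA) gf_Am (gfBl _ (gab *: H)).
  rewrite (gfZl _ gab) (gfZl _ gt) (gf_adjoint J_G H eta) alpha beta.
  by rewrite -/gab -/gt; ring.
- rewrite (gfBl _ (sff g f q a b)) (gf_sff_J etaN) (gf_sff_shape etaA) gf_Am.
  rewrite -(gf_adjoint Jt_adjoint) (gf_anti_isometry Jt_anti_isometry).
  rewrite (gfBl _ (gab *: H)) (gfZl _ gab) (gfZl _ gt).
  rewrite (gf_anti_isometry J_norden) alpha beta.
  by rewrite -/gab -/gt; ring.
Qed.

End Hypersurface.

Theorem lemma2p5 (R : realType) (n : nat)
  (U : set 'rV[R]_((n.*2).+2)) (g J : 'rV[R]_((n.*2).+2) -> 'M[R]_((n.*2).+2))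
  (V : set 'rV[R]_(n.*2)) (f : 'rV[R]_(n.*2) -> 'rV[R]_((n.*2).+2))
  (q : 'rV[R]_(n.*2)) :
  kahler_norden U g J ->
  holomorphic_hypersurface U g J V f ->
  V q ->
  (exists eta : 'rV[R]_((n.*2).+2),
     [/\ eta != 0,
         forall a, gf (g (f q)) eta (df f q a) = 0 &
         exists (Am Jt : 'M[R]_(n.*2)),
           [/\ is_shape_op g f q eta Am, is_tangent_J J f q Jt &
               Am = (\tr Am / (n.*2)%:R) *: 1%:M
                    - (\tr (Jt *m Am) / (n.*2)%:R) *: Jt]]) ->
  forall a b : 'rV[R]_(n.*2),
    sff g f q a b =
      gf (g (f q)) (df f q a) (df f q b) *: mean_curv g f q
      - gf (g (f q)) (df f q a *m J (f q)) (df f q b) *: (mean_curv g f q *m J (f q)).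
Proof.
move=> KN HS Vq [eta [eta0 eta_orth [Am [Jt [etaA Jt_tangent Am_eq]]]]].
have etaN := gf_df_eq0_normal HS Vq eta_orth.
exact: (sff_decomposition KN HS Vq Jt_tangent eta0 etaN etaA Am_eq).
Qed.
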